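(* Let $G$ be a finite simple graph with $n$ vertices and minimum degree $\delta > 1$. Let $\widehat{\delta} = \lfloor 0.5\,\delta \rfloor$, let $\delta' = \delta$ if $\delta$ is odd and $\delta' = \delta+1$ if $\delta$ is even, and let $\widetilde{d}_{0.5} = \binom{\delta'+1}{\lceil 0.5\,\delta' \rceil}$. Then $$\gamma_s(G) \le \left(1 - \frac{2\widehat{\delta}}{(1+\widehat{\delta})^{1+1/\widehat{\delta}}\,\widetilde{d}_{0.5}^{\;1/\widehat{\delta}}}\right) n.$$
   Context: For a vertex $v$ of $G$, $N[v]$ denotes the closed neighbourhood of $v$ (i.e. $v$ together with its neighbours). A signed domination function of $G$ is a function $f: V(G) \to \{-1, 1\}$ such that $\sum_{x \in N[v]} f(x) \ge 1$ for every vertex $v \in V(G)$. The weight of $f$ is $f(V(G)) = \sum_{v \in V(G)} f(v)$. The signed domination number $\gamma_s(G)$ is the minimum weight of a signed domination function of $G$. *)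

From HB Require Import structures.
From mathcomp Require Import all_boot all_order all_algebra.
From mathcomp Require Import all_classical all_reals all_analysis.
Set Implicit Arguments. Unset Strict Implicit. Unset Printing Implicit Defensive.
Import Order.TTheory GRing.Theory Num.Theory.
Local Open Scope ring_scope.

Definition simple_graph (T : finType) (e : rel T) : Prop :=
  symmetric e /\ irreflexive e.

Definition deg (T : finType) (e : rel T) (v : T) : nat := #|[set u | e v u]|.

Definition is_min_degree (T : finType) (e : rel T) (d : nat) : Prop :=
  (forall v, (d <= deg e v)%N) /\ (exists v, deg e v = d).

Definition cnbhd (T : finType) (e : rel T) (v : T) : {set T} :=
  v |: [set u | e v u].

(* A function f : V -> {-1,1}, encoded as a boolean function
   (true = +1, false = -1). *)
Definition sval (b : bool) : int := if b then 1 else -1.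

Definition sweight (T : finType) (f : {ffun T -> bool}) (A : {set T}) : int :=
  \sum_(x in A) sval (f x).

Definition is_sdf (T : finType) (e : rel T) (f : {ffun T -> bool}) : bool :=
  [forall v, 1 <= sweight f (cnbhd e v)].

Definition weight (T : finType) (f : {ffun T -> bool}) : int := sweight f [set: T].

(* signed domination number: minimum weight of a signed domination function
   (the all-(+1) function is always one, used as the default of the min). *)
Definition gamma_s (T : finType) (e : rel T) : int :=
  \big[Order.min/weight [ffun _ : T => true]]_(f : {ffun T -> bool} | is_sdf e f)
     weight f.

From HB Require Import structures.
From mathcomp Require Import all_boot all_order all_algebra.
From mathcomp Require Import all_classical all_reals all_analysis.
From mathcomp Require Import zify ring lra.
Import Order.TTheory GRing.Theory Num.Theory.
Local Open Scope ring_scope.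

Set Implicit Arguments. Unset Strict Implicit.

(* Put each vertex into a random set A independently with probability p, then
   delete vertices of A from every closed neighbourhood N[v] that meets A in
   more than (deg v)/2 vertices.  Giving the value -1 exactly on the resulting
   set M yields a signed domination function of weight n - 2|M|.  The excess
   |A :&: N[v]| - (deg v)/2 is at most C(|A :&: N[v]|, (deg v)/2 + 1), whose
   expectation C(deg v + 1, (deg v)/2 + 1) p^((deg v)/2 + 1) is, once 4p <= 1,
   at most D p^(h+1) with h = dhat and D = C(2h+2, h+1) = dtil.  So some M has
   |M| >= (p - D p^(h+1)) n, and p = ((1+h) D)^(-1/h) gives the bound. *)

Section Trimming.
Variables (T I : finType) (S : I -> {set T}) (K : I -> nat).

Lemma exists_trimmed_subset (A : {set T}) :
  exists M : {set T}, (forall i, #|M :&: S i| <= K i)%N /\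
    (#|A| <= #|M| + \sum_i (#|A :&: S i| - K i))%N.
Proof.
move: {2}#|A| (leqnn #|A|) => n; elim: n A => [|n IH] A card_A.
  have -> : A = finset.set0 by apply/eqP; rewrite -cards_eq0 -leqn0.
  by exists finset.set0; split=> [i|]; rewrite ?leq_addr // finset.set0I cards0.
have [small_A|] := boolP [forall i, #|A :&: S i| <= K i]%N.
  by exists A; split=> [i|]; [exact: (forallP small_A) | rewrite leq_addr].
rewrite negb_forall => /existsP[i]; rewrite -ltnNge => large_i.
have /set0Pn[x xAS] : A :&: S i != finset.set0 by rewrite -card_gt0; lia.
have xA : x \in A by case/setIP: xAS.
have card_Ax : #|A| = #|A :\ x|.+1 by rewrite (cardsD1 x A) xA.
have [M [small_M le_M]] := IH (A :\ x) (ltac:(lia)).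
exists M; split => //.
have le_excess j : (#|(A :\ x) :&: S j| - K j <= #|A :&: S j| - K j)%N.
  by rewrite leq_sub2r // subset_leq_card // finset.setSI // subsetDl.
have lt_excess_i : (#|(A :\ x) :&: S i| - K i < #|A :&: S i| - K i)%N.
  by move: large_i; rewrite finset.setIDAC (cardsD1 x (A :&: S i)) xAS /=; lia.
suff: (\sum_j (#|(A :\ x) :&: S j| - K j) < \sum_j (#|A :&: S j| - K j))%N by lia.
rewrite (bigD1 i) // [X in (_ < X)%N](bigD1 i) //=.
rewrite -addSn leq_add //.
by apply: leq_sum => j _; apply: le_excess.
Qed.

End Trimming.

Section SignedDomination.
Variables (T : finType) (e : rel T).

Lemma card_cnbhd v : irreflexive e -> #|cnbhd e v| = (deg e v).+1.
Proof. by move=> e_irr; rewrite cardsU1 inE e_irr. Qed.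

Lemma sweight_notin (M A : {set T}) :
  sweight [ffun x => x \notin M] A = #|A|%:Z - 2 * #|A :&: M|%:Z.
Proof.
rewrite /sweight (big_setID M) /=.
rewrite (eq_bigr (fun _ => -1)); last by move=> x /setIP[_]; rewrite ffunE => ->.
rewrite [X in _ + X](eq_bigr (fun _ => 1)); last first.
  by move=> x /setDP[_]; rewrite ffunE => /negbTE->.
rewrite !sumr_const -(cardsID M A) mulNrn natz PoszD; lia.
Qed.

Lemma is_sdf_notin (M : {set T}) : irreflexive e ->
  (forall v, #|M :&: cnbhd e v| <= (deg e v)./2)%N ->
  is_sdf e [ffun x => x \notin M].
Proof.
move=> e_irr small_M; apply/forallP => v.
rewrite sweight_notin card_cnbhd // finset.setIC.
have := small_M v; have := odd_double_half (deg e v); lia.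
Qed.

Lemma gamma_s_le_notin (M : {set T}) : irreflexive e ->
  (forall v, #|M :&: cnbhd e v| <= (deg e v)./2)%N ->
  gamma_s e <= #|T|%:Z - 2 * #|M|%:Z.
Proof.
move=> e_irr /(is_sdf_notin e_irr) sdf_M.
by rewrite -cardsT -(finset.setTI M) -sweight_notin; exact: bigmin_le_cond.
Qed.

End SignedDomination.

Lemma bin_card_setI (T : finType) (A S : {set T}) k :
  'C(#|A :&: S|, k) = (\sum_(B : {set T} | (B \subset S) && (#|B| == k)) (B \subset A))%N.
Proof.
rewrite -cards_draws -sum1_card big_mkcond /= [RHS]big_mkcond /=.
apply: eq_bigr => B _; rewrite !inE finset.subsetI.
by case: (B \subset A); case: (B \subset S); case: (#|B| == k).
Qed.

Section ProductBernoulli.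
Variables (R : realType) (T : finType) (p : R).

Definition bernoulli_wt (f : {ffun T -> bool}) : R :=
  \prod_x (if f x then p else 1 - p).

Lemma bernoulli_wt_subset (B : {set T}) :
  \sum_f bernoulli_wt f * (B \subset [set x | f x])%:R = p ^+ #|B|.
Proof.
pose F x (b : bool) := if b then p else if x \in B then 0 else 1 - p.
transitivity (\sum_(f : {ffun T -> bool}) \prod_x F x (f x)).
  apply: eq_bigr => f _; rewrite /bernoulli_wt /F.
  have [/fintype.subsetP sub_B | /fintype.subsetPn[x xB]] := boolP (B \subset _).
    rewrite mulr1; apply: eq_bigr => x _.
    by case fx: (f x) => //; case: ifPn => // /sub_B; rewrite inE fx.
  by rewrite inE => /negbTE fx; rewrite mulr0 (bigD1 x) //= fx xB mul0r.
rewrite -bigA_distr_bigA (bigID (mem B)) /= [X in _ * X]big1 ?mulr1.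
  by rewrite -prodr_const; apply: eq_bigr => x xB; rewrite big_bool /F /= xB addr0.
by move=> x /negbTE xB; rewrite big_bool /F /= xB subrKC.
Qed.

Lemma bernoulli_wt_sum1 : \sum_f bernoulli_wt f = 1.
Proof.
rewrite -(expr0 p) -(cards0 T) -bernoulli_wt_subset.
by apply: eq_bigr => f _; rewrite finset.sub0set mulr1.
Qed.

Lemma bernoulli_wt_card :
  \sum_f bernoulli_wt f * #|[set x | f x]|%:R = p * #|T|%:R.
Proof.
transitivity (\sum_f \sum_x bernoulli_wt f * ([set x] \subset [set y | f y])%:R).
  apply: eq_bigr => f _; rewrite -mulr_sumr -sum1_card big_mkcond natr_sum /=.
  by congr (_ * _); apply: eq_bigr => x _; rewrite finset.sub1set; case: (x \in _).
rewrite exchange_big /= (eq_bigr (fun _ => p)) ?sumr_const ?mulr_natr //.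
by move=> x _; rewrite bernoulli_wt_subset cards1 expr1.
Qed.

Lemma bernoulli_wt_bin (S : {set T}) k :
  \sum_f bernoulli_wt f * 'C(#|[set x | f x] :&: S|, k)%:R = 'C(#|S|, k)%:R * p ^+ k.
Proof.
transitivity (\sum_f \sum_(B : {set T} | (B \subset S) && (#|B| == k))
   bernoulli_wt f * (B \subset [set x | f x])%:R).
  by apply: eq_bigr => f _; rewrite bin_card_setI natr_sum mulr_sumr.
rewrite exchange_big /= (eq_bigr (fun _ => p ^+ k)); last first.
  by move=> B /andP[_ /eqP <-]; rewrite bernoulli_wt_subset.
rewrite sumr_const mulr_natl -cards_draws; congr (_ *+ _).
by apply: eq_card => B; rewrite !inE.
Qed.

Hypothesis p01 : 0 < p < 1.

Lemma bernoulli_wt_gt0 f : 0 < bernoulli_wt f.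
Proof. by case/andP: p01 => p0 p1; apply: prodr_gt0 => x _; case: (f x); rewrite ?subr_gt0. Qed.

Lemma exists_ge_bernoulli_mean (X : {ffun T -> bool} -> R) c :
  c <= \sum_f bernoulli_wt f * X f -> exists f, c <= X f.
Proof.
move=> le_c; apply/existsP; apply: contraLR le_c; rewrite negb_exists -ltNge.
move=> /forallP lt_X; rewrite -[c]mul1r -bernoulli_wt_sum1 mulr_suml.
apply: ltr_sum; first by apply/hasP; exists [ffun => true]; rewrite ?mem_index_enum.
by move=> f _; rewrite ltr_pM2l ?bernoulli_wt_gt0 // ltNge lt_X.
Qed.

End ProductBernoulli.

Lemma leq_sub_binS m k : (m - k <= 'C(m, k.+1))%N.
Proof.
elim: m => // m IH; rewrite binS.
have [le_km | ] := leqP k m; last lia.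
by have := bin_gt0 m k; rewrite le_km; lia.
Qed.

Lemma mul_bin_central k :
  (k.+2 * 'C(k.*2.+4, k.+2) = (k.*2.+3).*2 * 'C(k.*2.+2, k.+1))%N.
Proof.
have := mul_bin_diag k.*2.+4 k.+1; have := mul_bin_down k.*2.+3 k.+1.
rewrite /= (_ : k.*2.+3 - k.+1 = k.+2)%N; nia.
Qed.

Lemma bin_centralS_le k : ('C(k.*2.+4, k.+2) <= 4 * 'C(k.*2.+2, k.+1))%N.
Proof. by rewrite -(leq_pmul2l (ltn0Sn k.+1)) mul_bin_central; nia. Qed.

Lemma expn4_le_bin_central h : (4 ^ h <= h.+1 * 'C(h.*2.+2, h.+1))%N.
Proof.
elim: h => [|h IH]; first by rewrite bin1.
by rewrite doubleS mul_bin_central expnS; nia.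
Qed.

Lemma bin_le_central d : ('C(d.+1, d./2.+1) <= 'C((d./2).*2.+2, d./2.+1))%N.
Proof.
rewrite -[in d.+1](odd_double_half d).
by case: (odd d); rewrite ?add1n // add0n binS leq_addr.
Qed.

Lemma bin_central_expr_noninc (R : realFieldType) (p : R) : 0 <= p -> 4 * p <= 1 ->
  forall m n, (m <= n)%N ->
  'C(n.*2.+2, n.+1)%:R * p ^+ n.+1 <= 'C(m.*2.+2, m.+1)%:R * p ^+ m.+1.
Proof.
move=> p_ge0 p4 m n; apply: (Order.NatMonotonyTheory.nonincnP
  (f := fun k => 'C(k.*2.+2, k.+1)%:R * p ^+ k.+1)) => {m n} k /=.
set b := 'C(k.*2.+2, k.+1); have b_ge0 : 0 <= b%:R :> R by [].
have q_ge0 : 0 <= p ^+ k.+1 by rewrite exprn_ge0.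
have le_b : 'C(k.*2.+4, k.+2)%:R <= 4 * b%:R :> R.
  by rewrite -natrM ler_nat bin_centralS_le.
rewrite doubleS exprS; apply: (le_trans (y := 4 * b%:R * (p * p ^+ k.+1))).
  by rewrite ler_wpM2r // mulr_ge0.
have : 0 <= b%:R * p ^+ k.+1 by rewrite mulr_ge0.
by move: (b%:R : R) (p ^+ k.+1) => x y; nra.
Qed.

Lemma exprn_powRV (R : realType) (a : R) n : 0 <= a -> (0 < n)%N ->
  (a `^ n%:R^-1) ^+ n = a.
Proof.
move=> a_ge0 n_gt0; rewrite -powR_mulrn ?powR_ge0 // -powRrM mulVf ?powRr1 //.
by rewrite pnatr_eq0 -lt0n.
Qed.

Lemma mul_powR1D (R : realType) (a b x : R) : 0 < a -> 0 <= b ->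
  a `^ (1 + x) * b `^ x = a * (a * b) `^ x.
Proof.
move=> a_gt0 b_ge0; have a_ge0 := ltW a_gt0.
rewrite powRD; last by apply/implyP => _; rewrite gt_eqF.
by rewrite powRr1 // -mulrA powRM.
Qed.

Lemma exists_large_sdf_negative_set (R : realType) (T : finType) (e : rel T) h (p : R) :
  irreflexive e -> (forall v, h <= (deg e v)./2)%N -> 0 < p -> 4 * p <= 1 ->
  exists M : {set T}, (forall v, #|M :&: cnbhd e v| <= (deg e v)./2)%N /\
    (p - 'C(h.*2.+2, h.+1)%:R * p ^+ h.+1) * #|T|%:R <= #|M|%:R.
Proof.
move=> e_irr le_h p_gt0 p4; have p01 : 0 < p < 1 by rewrite p_gt0; lra.
pose excess (A : {set T}) v := (#|A :&: cnbhd e v| - (deg e v)./2)%N.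
set c := _ * p ^+ h.+1.
have mean_excess v : \sum_f bernoulli_wt p f * (excess [set x | f x] v)%:R <= c.
  apply: (le_trans (y := \sum_f bernoulli_wt p f *
                         'C(#|[set x | f x] :&: cnbhd e v|, ((deg e v)./2).+1)%:R)).
    apply: ler_sum => f _; apply: ler_wpM2l; first exact/ltW/bernoulli_wt_gt0.
    by rewrite ler_nat leq_sub_binS.
  rewrite bernoulli_wt_bin card_cnbhd //.
  apply: le_trans (bin_central_expr_noninc (ltW p_gt0) p4 (le_h v)).
  apply: ler_wpM2r; first by rewrite exprn_ge0 // ltW.
  by rewrite ler_nat bin_le_central.
have mean : (p - c) * #|T|%:R <= \sum_f bernoulli_wt p f *
    (#|[set x | f x]|%:R - \sum_v (excess [set x | f x] v)%:R).
  under eq_bigr do rewrite mulrBr mulr_sumr.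
  rewrite sumrB bernoulli_wt_card exchange_big /= mulrBl lerB //.
  by apply: le_trans (ler_sum _ (fun v _ => mean_excess v)) _; rewrite sumr_const mulr_natr.
have [f le_f] := exists_ge_bernoulli_mean p01 mean.
have [M [small_M le_M]] := exists_trimmed_subset (cnbhd e) (fun v => (deg e v)./2) [set x | f x].
exists M; split => //; apply: le_trans le_f _.
by rewrite lerBlDr -natr_sum -natrD ler_nat.
Qed.

Lemma gamma_s_le_param (R : realType) (T : finType) (e : rel T) h (p : R) :
  irreflexive e -> (forall v, h <= (deg e v)./2)%N -> 0 < p -> 4 * p <= 1 ->
  (gamma_s e)%:~R <= (1 - 2 * (p - 'C(h.*2.+2, h.+1)%:R * p ^+ h.+1)) * #|T|%:R.
Proof.
move=> e_irr le_h p_gt0 p4.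
have [M [small_M large_M]] := exists_large_sdf_negative_set e_irr le_h p_gt0 p4.
have := gamma_s_le_notin e_irr small_M; rewrite -(ler_int R) => /le_trans; apply.
by rewrite rmorphB rmorphM /= !pmulrn; lra.
Qed.

Theorem theorem4 (R : realType) (T : finType) (e : rel T) (delta : nat) :
  simple_graph e ->
  is_min_degree e delta ->
  (1 < delta)%N ->
  let dhat : nat := delta./2 in
  let delta' : nat := if odd delta then delta else delta.+1 in
  let dtil : nat := 'C(delta'.+1, uphalf delta') in
  ((gamma_s e)%:~R : R) <=
    (1 - (2 * dhat%:R) /
         ((1 + dhat%:R) `^ (1 + (dhat%:R)^-1) * (dtil%:R) `^ ((dhat%:R)^-1)))
    * (#|T|%:R).
Proof.
move=> [_ e_irr] [min_delta _] delta_gt1 /=; set h := delta./2.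
have h_gt0 : (0 < h)%N := half_leq delta_gt1.
have -> : (if odd delta then delta else delta.+1) = h.*2.+1.
  by have := odd_double_half delta; case: (odd delta) => /=; lia.
rewrite uphalfE -doubleS doubleK; set D := 'C(h.*2.+2, h.+1).
have h1_gt0 : 0 < 1 + h%:R :> R by rewrite addr_gt0 ?ltr0n.
have D_gt0 : 0 < D%:R :> R by rewrite ltr0n bin_gt0; lia.
rewrite mul_powR1D ?ler0n //; set r := _ `^ _.
have r_h : r ^+ h = (1 + h%:R) * D%:R by rewrite exprn_powRV // mulr_ge0 ?ltW.
have r_ge4 : 4 <= r.
  rewrite -(ler_pXn2r h_gt0) ?nnegrE ?powR_ge0 // r_h -natrX addrC natr1 -natrM.
  by rewrite ler_nat expn4_le_bin_central.
have r_gt0 : 0 < r by apply: lt_le_trans r_ge4.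
have -> : 1 - 2 * h%:R / ((1 + h%:R) * r) = 1 - 2 * (r^-1 - D%:R * r^-1 ^+ h.+1).
  by rewrite exprS exprVn r_h; field; rewrite !gt_eqF.
apply: gamma_s_le_param => //; first by move=> v; apply: half_leq.
  by rewrite invr_gt0.
by rewrite ler_pdivrMr // mul1r.
Qed.
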